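(* Let $\gamma>1$ and $F(x)=x^\gamma$. Let $u:[0,\infty)\to\mathbb R$ be the unique solution of $$u(T)=\mathbb E\Big[1_{\{\sigma_1>T\}}+\min_{a\in[0,1]}\big(a^\gamma+(1-a)^\gamma u(T-\sigma_1)\big)1_{\{\sigma_1\le T\}}\Big],$$ where $\sigma_1$ is exponentially distributed with rate $\lambda>0$ (the first arrival time of a Poisson process of intensity $\lambda$). Then $u$ satisfies $$\partial_T u(T)=\lambda u(T)\Big(\frac{1}{[1+u(T)^{1/(\gamma-1)}]^{\gamma-1}}-1\Big),\qquad u(0)=1,$$ and the optimal action $a(T)=\arg\min_{a\in[0,1]}\{a^\gamma+(1-a)^\gamma u(T)\}$ satisfies $$\partial_T a(T)=\frac{\lambda}{\gamma-1}a(T)(1-a(T))\big((1-a(T))^{\gamma-1}-1\big)<0,\qquad a(0)=1/2,$$ and $T\mapsto a(T)$ is convex.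
   Context: This is the continuous-sale-amount version of an execution problem: orders arrive according to a Poisson process $N$ of intensity $\lambda$ with arrival times $\sigma_1<\sigma_2<\cdots$; a holding of $x\ge0$ units may be sold in arbitrary real amounts at arrival times, with trade cost $F(\text{size})$ and the remainder $\xi_T$ sold at $T$ at cost $F(\xi_T)$; $u(T)$ is the minimal expected cost per unit of $x^\gamma$, i.e. $\hat u(x,T)=x^\gamma u(T)$. *)

From Stdlib Require Import Reals.
From Coquelicot Require Import Coquelicot.
Open Scope R_scope.

(* Real power x^y for x >= 0, with the convention 0^y = 0 (y > 0).
   (Stdlib's Rpower x y = exp (y ln x) is only meaningful for x > 0.) *)
Definition pw (x y : R) : R := if Rle_dec x 0 then 0 else Rpower x y.

(* Minimum over a in [0,1] of f a (for continuous f on the compact [0,1]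
   the infimum is attained, so this is the min). *)
Definition min01 (f : R -> R) : R :=
  real (Glb_Rbar (fun y => exists a, 0 <= a <= 1 /\ y = f a)).

Definition cost (gamma a v : R) : R := pw a gamma + pw (1 - a) gamma * v.

(* E[ 1_{sigma1 > T} + min_a (...) u(T - sigma1) 1_{sigma1 <= T} ],
   sigma1 ~ Exp(lambda), written via the density lambda e^{-lambda s}. *)
Definition dpp_rhs (lambda gamma : R) (u : R -> R) (T : R) : R :=
  exp (- lambda * T)
  + RInt (fun s => lambda * exp (- lambda * s)
                   * min01 (fun a => cost gamma a (u (T - s)))) 0 T.

From Stdlib Require Import Reals Lra.
From Coquelicot Require Import Coquelicot.
Open Scope R_scope.

(* For y > 0 the strictly convex problem min_{b in [0,1]} b^g + (1-b)^g y is solved by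
   its first-order condition: with w = y^(1/(g-1)) the unique minimiser is w/(1+w) and
   the minimum is y/(1+w)^(g-1).  Multiplying the dynamic programming equation by
   exp(lambda T) and substituting r = T - s gives
   exp(lambda T) u(T) = 1 + int_0^T lambda exp(lambda r) min_b cost(b, u(r)) dr,
   so u is continuous, stays positive by continuous induction, and then solves
   u' = lambda (min_b cost(b, u) - u), which is the stated ODE.  The chain rule gives
   the ODE for a = w/(1+w) o u; its right-hand side is negative on (0,1), so a
   decreases from a(0) = 1/2, and it is antitone on (0,1/2], so a' increases and a is
   convex. *)

Lemma pw_pos x y : 0 < x -> pw x y = Rpower x y.
Proof. intros Hx; unfold pw; destruct (Rle_dec x 0); lra. Qed.

Lemma pw_0 y : pw 0 y = 0.
Proof. unfold pw; destruct (Rle_dec 0 0); lra. Qed.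

Lemma Rpower_gt_0 x y : 0 < Rpower x y.
Proof. apply exp_pos. Qed.

Lemma Rpower_1_l e : Rpower 1 e = 1.
Proof. unfold Rpower; rewrite ln_1, Rmult_0_r; apply exp_0. Qed.

Lemma Rpower_pred x e : 0 < x -> Rpower x e = Rpower x (e - 1) * x.
Proof.
  intros Hx. rewrite <- (Rpower_1 x) at 3 by exact Hx.
  rewrite <- Rpower_plus. f_equal; ring.
Qed.

Lemma Rpower_inv x e : 0 < x -> Rpower (/ x) e = / Rpower x e.
Proof.
  intros Hx; unfold Rpower; rewrite ln_Rinv by exact Hx.
  rewrite <- exp_Ropp; f_equal; ring.
Qed.

Lemma Rpower_lt_1 x e : 0 < x < 1 -> 0 < e -> Rpower x e < 1.
Proof.
  intros Hx He; unfold Rpower; rewrite <- exp_0; apply exp_increasing.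
  assert (ln x < 0) by (rewrite <- ln_1; apply ln_increasing; lra). nra.
Qed.

Lemma tangent_lt_of_derive_increasing (f df : R -> R) y z :
  (forall x, 0 < x -> is_derive f x (df x)) ->
  (forall x x', 0 < x -> x < x' -> df x < df x') ->
  0 < y -> 0 < z -> z <> y -> f y + df y * (z - y) < f z.
Proof.
  intros Hd Hinc Hy Hz Hzy.
  assert (Hmvt : forall p q, 0 < p -> p < q ->
            exists c, f q - f p = df c * (q - p) /\ p < c < q).
  { intros p q Hp Hpq; apply MVT_cor2; [exact Hpq|].
    intros c Hc; apply is_derive_Reals, Hd; lra. }
  destruct (Rlt_or_le z y) as [Hlt | Hle].
  - destruct (Hmvt z y Hz Hlt) as [c [Hc Hzc]].
    assert (df c < df y) by (apply Hinc; lra). nra.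
  - destruct (Hmvt y z Hy ltac:(lra)) as [c [Hc Hyc]].
    assert (df y < df c) by (apply Hinc; lra). nra.
Qed.

Lemma pw_tangent_lt g y z : 1 < g -> 0 < y -> 0 <= z -> z <> y ->
  Rpower y g + g * Rpower y (g - 1) * (z - y) < pw z g.
Proof.
  intros Hg Hy Hz Hzy.
  destruct (Req_dec z 0) as [-> | Hz0].
  - rewrite pw_0, (Rpower_pred y g) by exact Hy.
    assert (0 < Rpower y (g - 1) * y)
      by (apply Rmult_lt_0_compat; [apply Rpower_gt_0 | exact Hy]).
    nra.
  - rewrite pw_pos by lra.
    apply (tangent_lt_of_derive_increasing (fun x => Rpower x g)
             (fun x => g * Rpower x (g - 1))); try lra.
    + intros x Hx; apply is_derive_Reals, derivable_pt_lim_power, Hx.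
    + intros x x' Hx Hxx'.
      apply Rmult_lt_compat_l; [lra|]. apply Rlt_Rpower_l; lra.
Qed.

Lemma pw_tangent_le g y z : 1 < g -> 0 < y -> 0 <= z ->
  Rpower y g + g * Rpower y (g - 1) * (z - y) <= pw z g.
Proof.
  intros Hg Hy Hz. destruct (Req_dec z y) as [-> | Hzy].
  - rewrite pw_pos by exact Hy; lra.
  - left; apply pw_tangent_lt; assumption.
Qed.
Definition opt_weight (g y : R) : R := Rpower y (1 / (g - 1)).
Definition opt_share (g y : R) : R := opt_weight g y / (1 + opt_weight g y).
Definition opt_cost (g y : R) : R := y / Rpower (1 + opt_weight g y) (g - 1).

Lemma opt_weight_Rpower g y : 1 < g -> 0 < y -> Rpower (opt_weight g y) (g - 1) = y.
Proof.
  intros Hg Hy; unfold opt_weight; rewrite Rpower_mult.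
  replace (1 / (g - 1) * (g - 1)) with 1 by (field; lra). apply Rpower_1, Hy.
Qed.

Lemma opt_share_bounds g y : 0 < opt_share g y < 1.
Proof.
  unfold opt_share; assert (0 < opt_weight g y) by apply Rpower_gt_0.
  split; [apply Rdiv_lt_0_compat; lra|].
  apply Rmult_lt_reg_r with (1 + opt_weight g y); [lra|].
  unfold Rdiv; rewrite Rmult_assoc, Rinv_l by lra; lra.
Qed.

Lemma opt_cost_pos g y : 0 < y -> 0 < opt_cost g y.
Proof. intros Hy; apply Rdiv_lt_0_compat; [exact Hy | apply Rpower_gt_0]. Qed.

Lemma opt_share_1 g : opt_share g 1 = 1 / 2.
Proof. unfold opt_share, opt_weight; rewrite Rpower_1_l; field. Qed.

Lemma cost_opt_share_lt g y b : 1 < g -> 0 < y -> 0 <= b <= 1 -> b <> opt_share g y ->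
  cost g (opt_share g y) y < cost g b y.
Proof.
  intros Hg Hy Hb Hne.
  set (w := opt_weight g y); set (p := opt_share g y); set (q := / (1 + w)).
  assert (Hw : 0 < w) by apply Rpower_gt_0.
  assert (Hq : 0 < q) by (apply Rinv_0_lt_compat; lra).
  assert (Hpq : p = w * q) by (unfold p, opt_share, q; fold w; field; lra).
  assert (Hp : 0 < p) by (rewrite Hpq; nra).
  assert (H1p : 1 - p = q) by (unfold p, opt_share, q; fold w; field; lra).
  (* first-order condition: p^(g-1) = y q^(g-1) *)
  assert (Hfoc : Rpower p (g - 1) = y * Rpower q (g - 1)).
  { rewrite Hpq, <- Rpower_mult_distr by assumption.
    unfold w; rewrite opt_weight_Rpower by assumption; reflexivity. }
  assert (Tb := pw_tangent_lt g p b Hg Hp ltac:(lra) Hne).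
  assert (T1b := pw_tangent_le g q (1 - b) Hg Hq ltac:(lra)).
  unfold cost; rewrite H1p, !pw_pos by assumption.
  rewrite (Rpower_pred p g), (Rpower_pred q g), Hfoc in * by assumption.
  nra.
Qed.

Lemma cost_opt_share g y : 1 < g -> 0 < y -> cost g (opt_share g y) y = opt_cost g y.
Proof.
  intros Hg Hy.
  set (w := opt_weight g y); set (q := / (1 + w)).
  assert (Hw : 0 < w) by apply Rpower_gt_0.
  assert (Hq : 0 < q) by (apply Rinv_0_lt_compat; lra).
  assert (Hpq : opt_share g y = w * q) by (unfold opt_share, q; fold w; field; lra).
  assert (H1p : 1 - opt_share g y = q) by (unfold opt_share, q; fold w; field; lra).
  assert (Hwy : Rpower w (g - 1) = y) by (apply opt_weight_Rpower; assumption).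
  unfold cost, opt_cost; fold w; rewrite H1p, Hpq, !pw_pos by nra.
  rewrite <- Rpower_mult_distr by assumption.
  rewrite (Rpower_pred w g), Hwy by assumption.
  unfold q; rewrite !Rpower_inv, (Rpower_pred (1 + w) g) by lra.
  assert (0 < Rpower (1 + w) (g - 1)) by apply Rpower_gt_0.
  field; split; lra.
Qed.

Lemma cost_opt_share_le g y b : 1 < g -> 0 < y -> 0 <= b <= 1 ->
  cost g (opt_share g y) y <= cost g b y.
Proof.
  intros Hg Hy Hb. destruct (Req_dec b (opt_share g y)) as [-> | Hne]; [lra|].
  left; apply cost_opt_share_lt; assumption.
Qed.

Lemma min01_cost g y : 1 < g -> 0 < y -> min01 (fun b => cost g b y) = opt_cost g y.
Proof.
  intros Hg Hy; unfold min01.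
  rewrite (is_glb_Rbar_unique _ (Finite (opt_cost g y))); [reflexivity|split].
  - intros z [b [Hb ->]]; simpl; rewrite <- cost_opt_share by assumption.
    apply cost_opt_share_le; assumption.
  - intros l Hl; apply Hl; exists (opt_share g y).
    rewrite cost_opt_share by assumption.
    split; [pose proof (opt_share_bounds g y); lra | reflexivity].
Qed.

Lemma argmin_cost_opt_share g y a : 1 < g -> 0 < y -> 0 <= a <= 1 ->
  (forall b, 0 <= b <= 1 -> cost g a y <= cost g b y) -> a = opt_share g y.
Proof.
  intros Hg Hy Ha Hmin. destruct (Req_dec a (opt_share g y)) as [E | Hne]; [exact E|].
  pose proof (opt_share_bounds g y).
  pose proof (cost_opt_share_lt g y a Hg Hy Ha Hne).
  specialize (Hmin (opt_share g y) ltac:(lra)); lra.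
Qed.

Lemma continuous_opt_cost g y : 1 < g -> 0 < y -> continuous (opt_cost g) y.
Proof.
  intros Hg Hy; apply (ex_derive_continuous (K := R_AbsRing) (V := R_NormedModule)).
  unfold opt_cost, opt_weight, Rpower; auto_derive.
  pose proof (exp_pos (1 / (g - 1) * ln y)).
  pose proof (exp_pos ((g - 1) * ln (1 + exp (1 / (g - 1) * ln y)))).
  repeat split; lra.
Qed.

Lemma is_derive_opt_share g y : 1 < g -> 0 < y ->
  is_derive (opt_share g) y (opt_weight g y / ((g - 1) * y * (1 + opt_weight g y) ^ 2)).
Proof.
  intros Hg Hy; unfold opt_share, opt_weight, Rpower; auto_derive;
    pose proof (exp_pos (1 / (g - 1) * ln y)).
  - repeat split; lra.
  - field; lra.
Qed.

Definition u_rate (l g y : R) : R :=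
  l * y * (1 / pw (1 + pw y (1 / (g - 1))) (g - 1) - 1).

Definition a_rate (l g x : R) : R :=
  l / (g - 1) * x * (1 - x) * (pw (1 - x) (g - 1) - 1).

Lemma u_rate_opt_cost l g y : 1 < g -> 0 < y -> u_rate l g y = l * (opt_cost g y - y).
Proof.
  intros Hg Hy; unfold u_rate, opt_cost.
  rewrite (pw_pos y) by exact Hy; fold (opt_weight g y).
  assert (0 < opt_weight g y) by apply Rpower_gt_0.
  assert (0 < Rpower (1 + opt_weight g y) (g - 1)) by apply Rpower_gt_0.
  rewrite pw_pos by lra; field; lra.
Qed.

Lemma a_rate_opt_share l g y : 1 < g -> 0 < y ->
  l * (opt_cost g y - y) * (opt_weight g y / ((g - 1) * y * (1 + opt_weight g y) ^ 2))
  = a_rate l g (opt_share g y).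
Proof.
  intros Hg Hy; unfold a_rate, opt_cost, opt_share; set (w := opt_weight g y).
  assert (Hw : 0 < w) by apply Rpower_gt_0.
  replace (1 - w / (1 + w)) with (/ (1 + w)) by (field; lra).
  rewrite pw_pos, Rpower_inv by (try apply Rinv_0_lt_compat; lra).
  assert (0 < Rpower (1 + w) (g - 1)) by apply Rpower_gt_0.
  field; repeat split; lra.
Qed.

Lemma a_rate_neg l g x : 0 < l -> 1 < g -> 0 < x < 1 -> a_rate l g x < 0.
Proof.
  intros Hl Hg Hx; unfold a_rate; rewrite pw_pos by lra.
  assert (Rpower (1 - x) (g - 1) < 1) by (apply Rpower_lt_1; lra).
  assert (0 < l / (g - 1)) by (apply Rdiv_lt_0_compat; lra).
  assert (0 < x * (1 - x)) by (apply Rmult_lt_0_compat; lra).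
  assert (0 < l / (g - 1) * (x * (1 - x))) by (apply Rmult_lt_0_compat; lra).
  nra.
Qed.

(* a_rate is (l/(g-1)) times the product of the increasing positive x(1-x) and the
   decreasing negative (1-x)^(g-1) - 1. *)
Lemma a_rate_antitone l g x x' : 0 < l -> 1 < g -> 0 < x -> x <= x' -> x' <= 1 / 2 ->
  a_rate l g x' <= a_rate l g x.
Proof.
  intros Hl Hg Hx Hxx' Hx'; unfold a_rate; rewrite !pw_pos by lra.
  assert (Hc : 0 < l / (g - 1)) by (apply Rdiv_lt_0_compat; lra).
  assert (HA : 0 < x * (1 - x) <= x' * (1 - x')).
  { split; [apply Rmult_lt_0_compat; lra|].
    assert (0 <= (x' - x) * (1 - x - x')) by (apply Rmult_le_pos; lra). nra. }
  assert (HB : Rpower (1 - x') (g - 1) <= Rpower (1 - x) (g - 1) < 1).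
  { split; [apply Rle_Rpower_l | apply Rpower_lt_1]; lra. }
  assert (HAB : x' * (1 - x') * (Rpower (1 - x') (g - 1) - 1)
                <= x * (1 - x) * (Rpower (1 - x) (g - 1) - 1)) by nra.
  replace (l / (g - 1) * x' * (1 - x') * (Rpower (1 - x') (g - 1) - 1))
    with (l / (g - 1) * (x' * (1 - x') * (Rpower (1 - x') (g - 1) - 1))) by ring.
  replace (l / (g - 1) * x * (1 - x) * (Rpower (1 - x) (g - 1) - 1))
    with (l / (g - 1) * (x * (1 - x) * (Rpower (1 - x) (g - 1) - 1))) by ring.
  apply Rmult_le_compat_l; lra.
Qed.

Lemma is_RInt_exp_kernel c T (m : R -> R) :
  ex_RInt (fun s => c * exp (- c * s) * m (T - s)) 0 T ->
  is_RInt (fun r => c * exp (c * r) * m r) 0 T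
    (exp (c * T) * RInt (fun s => c * exp (- c * s) * m (T - s)) 0 T).
Proof.
  intros Hex; set (k := fun s => c * exp (- c * s) * m (T - s)).
  assert (Hswap : is_RInt k (-1 * 0 + T) (-1 * T + T) (- RInt k 0 T)).
  { replace (-1 * 0 + T) with T by ring; replace (-1 * T + T) with 0 by ring.
    exact (is_RInt_swap k T 0 _ (RInt_correct k 0 T Hex)). }
  apply is_RInt_comp_lin, (is_RInt_scal _ _ _ (- exp (c * T))) in Hswap.
  replace (exp (c * T) * RInt k 0 T) with (scal (- exp (c * T)) (- RInt k 0 T))
    by (unfold scal; simpl; unfold mult; simpl; ring).
  refine (is_RInt_ext _ _ _ _ _ _ Hswap); intros r _.
  unfold k, scal; simpl; unfold mult; simpl.
  replace (T - (-1 * r + T)) with r by ring.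
  replace (- c * (-1 * r + T)) with (c * r + - (c * T)) by ring.
  rewrite exp_plus, exp_Ropp; field; apply Rgt_not_eq, exp_pos.
Qed.

Lemma continuous_Rmax_0 x : continuous (fun r => Rmax r 0) x.
Proof.
  apply continuous_ext with (fun r => (r + Rabs r) / 2).
  { intros r; unfold Rmax, Rabs; destruct (Rle_dec r 0), (Rcase_abs r); lra. }
  apply (continuous_mult (K := R_AbsRing) (fun r => r + Rabs r) (fun _ => / 2));
    [|apply continuous_const].
  apply (continuous_plus (K := R_AbsRing) (fun r => r) Rabs);
    [apply continuous_id | apply continuous_Rabs].
Qed.

Lemma is_derive_ext_nonneg (f g : R -> R) T l : 0 < T ->
  (forall x, 0 <= x -> g x = f x) -> is_derive f T l -> is_derive g T l.
Proof.
  intros HT Hgf; apply is_derive_ext_loc.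
  exists (mkposreal T HT); intros y Hy.
  change (Rabs (y - T) < T) in Hy; apply Rabs_def2 in Hy.
  symmetry; apply Hgf; lra.
Qed.

Lemma filterlim_diff_quotient_at_right (f g : R -> R) l :
  (forall x, 0 <= x -> g x = f x) -> is_derive f 0 l ->
  filterlim (fun h => (g h - g 0) / h) (at_right 0) (locally l).
Proof.
  intros Hgf Hd; apply is_derive_Reals in Hd.
  apply filterlim_locally; intros eps.
  destruct (Hd eps (cond_pos eps)) as [delta Hdelta].
  exists delta; intros h Hh Hh0.
  change (Rabs (h - 0) < delta) in Hh.
  change (Rabs ((g h - g 0) / h - l) < eps).
  rewrite !Hgf, <- (Rplus_0_l h) at 1 by lra.
  apply Hdelta; [lra | rewrite Rminus_0_r in Hh; exact Hh].
Qed.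

(* Continuous induction on [0, +oo): the supremum of the initial intervals on which
   f stays positive can neither be an endpoint where f is positive (continuity pushes
   it further) nor a point where f fails to be positive. *)
Lemma pos_by_continuous_induction (f : R -> R) :
  (forall x, 0 <= x -> continuous f x) ->
  (forall T, 0 <= T -> (forall r, 0 <= r < T -> 0 < f r) -> 0 < f T) ->
  forall T, 0 <= T -> 0 < f T.
Proof.
  intros Hc Hstep T0 HT0.
  destruct (Rlt_or_le 0 (f T0)) as [Hp | Hn]; [exact Hp | exfalso].
  set (E := fun t => 0 <= t <= T0 /\ forall r, 0 <= r <= t -> 0 < f r).
  assert (E0 : E 0).
  { split; [lra|]; intros r Hr; replace r with 0 by lra.
    apply Hstep; [lra | intros; lra]. }
  assert (Eb : bound E) by (exists T0; intros t [Ht _]; lra).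
  destruct (completeness E Eb (ex_intro _ 0 E0)) as [m [Hub Hlub]].
  assert (Hm : 0 <= m <= T0) by (split; [apply Hub, E0 | apply Hlub; intros t [Ht _]; lra]).
  assert (Hbelow : forall r, 0 <= r < m -> 0 < f r).
  { intros r Hr; destruct (Rlt_or_le 0 (f r)) as [Hp | Hn']; [exact Hp | exfalso].
    enough (m <= r) by lra.
    apply Hlub; intros t [_ Ht]; destruct (Rle_or_lt t r) as [Htr | Hrt]; [exact Htr|].
    specialize (Ht r ltac:(lra)); lra. }
  assert (Hfm : 0 < f m) by (apply Hstep; [lra | exact Hbelow]).
  destruct (proj1 (filterlim_locally (F := locally m) f (f m)) (Hc m ltac:(lra))
              (mkposreal _ Hfm)) as [d Hd].
  assert (Hdpos := cond_pos d).
  set (t := Rmin (m + d / 2) T0).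
  assert (Ht : E t).
  { split; [unfold t, Rmin; destruct (Rle_dec (m + d / 2) T0); lra|].
    intros r Hr; destruct (Rlt_or_le r m) as [Hrm | Hmr]; [apply Hbelow; lra|].
    assert (Hball : ball m d r).
    { change (Rabs (r - m) < d); rewrite Rabs_right by lra.
      unfold t, Rmin in Hr; destruct (Rle_dec (m + d / 2) T0); lra. }
    specialize (Hd r Hball); change (Rabs (f r - f m) < f m) in Hd.
    apply Rabs_def2 in Hd; lra. }
  assert (Htm : t <= m) by (apply Hub, Ht).
  assert (HmT : m = T0) by (unfold t, Rmin in Htm; destruct (Rle_dec (m + d / 2) T0); lra).
  subst m; lra.
Qed.

Lemma nonincreasing_of_derive_neg (f df : R -> R) :
  (forall t, 0 <= t -> is_derive f t (df t)) -> (forall t, 0 <= t -> df t < 0) ->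
  forall x y, 0 <= x -> x <= y -> f y <= f x.
Proof.
  intros Hd Hneg x y Hx Hxy; destruct (Req_dec x y) as [-> | Hne]; [lra|].
  assert (Hincr := incr_function_le (fun t => - f t) 0 p_infty (fun t => - df t)).
  enough (- f x < - f y) by lra.
  apply Hincr; simpl; try lra; intros t Ht _.
  - apply (is_derive_opp f t (df t)), Hd, Ht.
  - specialize (Hneg t Ht); lra.
Qed.

Lemma convex_of_derive_nondecreasing (f df : R -> R) :
  (forall t, 0 <= t -> is_derive f t (df t)) ->
  (forall x y, 0 <= x -> x <= y -> df x <= df y) ->
  forall x y t, 0 <= x -> 0 <= y -> 0 <= t <= 1 ->
  f (t * x + (1 - t) * y) <= t * f x + (1 - t) * f y.
Proof.
  intros Hd Hmono.
  assert (Hmvt : forall p q, 0 <= p -> p < q ->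
            exists c, f q - f p = df c * (q - p) /\ p < c < q).
  { intros p q Hp Hpq; apply MVT_cor2; [exact Hpq|].
    intros c Hc; apply is_derive_Reals, Hd; lra. }
  (* the slope of the chord on [x, z] is at most that on [z, y] *)
  assert (Hlt : forall x y t, 0 <= x -> x < y -> 0 < t < 1 ->
            f (t * x + (1 - t) * y) <= t * f x + (1 - t) * f y).
  { intros x y t Hx Hxy Ht; set (z := t * x + (1 - t) * y).
    destruct (Hmvt x z Hx ltac:(unfold z; nra)) as [c1 [E1 C1]].
    destruct (Hmvt z y ltac:(unfold z; nra) ltac:(unfold z; nra)) as [c2 [E2 C2]].
    assert (Hc : df c1 <= df c2) by (apply Hmono; lra).
    replace (z - x) with ((1 - t) * (y - x)) in E1 by (unfold z; ring).
    replace (y - z) with (t * (y - x)) in E2 by (unfold z; ring).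
    assert (0 <= t * (1 - t) * (y - x) * (df c2 - df c1)).
    { repeat apply Rmult_le_pos; nra. }
    nra. }
  intros x y t Hx Hy Ht.
  destruct (Req_dec t 0) as [-> | Ht0].
  { replace (0 * x + (1 - 0) * y) with y by ring; lra. }
  destruct (Req_dec t 1) as [-> | Ht1].
  { replace (1 * x + (1 - 1) * y) with x by ring; lra. }
  destruct (Rtotal_order x y) as [Hxy | [-> | Hyx]].
  - apply Hlt; lra.
  - replace (t * y + (1 - t) * y) with y by ring; lra.
  - replace (t * x + (1 - t) * y) with ((1 - t) * y + (1 - (1 - t)) * x) by ring.
    specialize (Hlt y x (1 - t) Hy Hyx ltac:(lra)); lra.
Qed.

Section DynamicProgramming.

Variables (lambda gamma : R) (u a : R -> R).
Hypothesis lambda_pos : 0 < lambda.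
Hypothesis gamma_gt_1 : 1 < gamma.
Hypothesis dpp_integrable : forall T, 0 <= T ->
  ex_RInt (fun s => lambda * exp (- lambda * s)
                    * min01 (fun b => cost gamma b (u (T - s)))) 0 T.
Hypothesis dpp_solution : forall T, 0 <= T -> u T = dpp_rhs lambda gamma u T.
Hypothesis a_argmin : forall T, 0 <= T -> 0 <= a T <= 1 /\
  forall b, 0 <= b <= 1 -> cost gamma (a T) (u T) <= cost gamma b (u T).

Definition min_cost (r : R) : R := min01 (fun b => cost gamma b (u r)).

(* Extended to r < 0 by its value at 0, so that its primitive is differentiable at 0. *)
Definition source (r : R) : R := lambda * exp (lambda * Rmax r 0) * min_cost (Rmax r 0).

Definition u_ext (T : R) : R := exp (- lambda * T) * (1 + RInt source 0 T).

Lemma is_RInt_source T : 0 <= T ->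
  is_RInt source 0 T (exp (lambda * T) * (u T - exp (- lambda * T))).
Proof.
  intros HT.
  assert (Hk := is_RInt_exp_kernel lambda T min_cost (dpp_integrable T HT)).
  replace (u T - exp (- lambda * T)) with
    (RInt (fun s => lambda * exp (- lambda * s) * min_cost (T - s)) 0 T)
    by (rewrite dpp_solution by exact HT; unfold dpp_rhs, min_cost;
        symmetry; apply Rplus_minus_l).
  refine (is_RInt_ext _ _ _ _ _ _ Hk); intros r Hr.
  rewrite Rmin_left, Rmax_right in Hr by exact HT.
  unfold source; rewrite Rmax_left by lra; reflexivity.
Qed.

Lemma ex_RInt_source x y : ex_RInt source x y.
Proof.
  assert (H0 : forall T, ex_RInt source 0 T).
  { intros T; destruct (Rle_lt_dec 0 T) as [HT | HT].
    - eexists; apply is_RInt_source, HT.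
    - apply (ex_RInt_ext (fun _ => source 0)); [|apply ex_RInt_const].
      intros r Hr; rewrite Rmin_right, Rmax_left in Hr by lra.
      unfold source; rewrite !Rmax_right by lra; reflexivity. }
  apply ex_RInt_Chasles with 0; [apply ex_RInt_swap|]; apply H0.
Qed.

Lemma u_eq_u_ext T : 0 <= T -> u T = u_ext T.
Proof.
  intros HT; unfold u_ext; rewrite (is_RInt_unique _ _ _ _ (is_RInt_source T HT)).
  replace (lambda * T) with (- (- lambda * T)) by ring; rewrite exp_Ropp.
  field; apply Rgt_not_eq, exp_pos.
Qed.

Lemma u_ext_0 : u_ext 0 = 1.
Proof.
  unfold u_ext; rewrite RInt_point, Rmult_0_r, exp_0; change (1 * (1 + 0) = 1); ring.
Qed.

Lemma continuous_u_ext T : continuous u_ext T.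
Proof.
  apply (continuous_mult (K := R_AbsRing) (fun T => exp (- lambda * T))
           (fun T => 1 + RInt source 0 T)).
  - apply (ex_derive_continuous (K := R_AbsRing) (V := R_NormedModule)); auto_derive; auto.
  - apply (continuous_plus (K := R_AbsRing) (fun _ => 1)); [apply continuous_const|].
    apply (continuous_RInt_1 source 0 T).
    apply filter_forall; intros y; exact (RInt_correct source 0 y (ex_RInt_source 0 y)).
Qed.

Lemma source_opt_cost r : 0 <= r -> 0 < u_ext r ->
  source r = lambda * exp (lambda * r) * opt_cost gamma (u_ext r).
Proof.
  intros Hr Hu; unfold source, min_cost.
  rewrite Rmax_left, u_eq_u_ext, min01_cost by assumption; reflexivity.
Qed.

Lemma u_ext_pos T : 0 <= T -> 0 < u_ext T.
Proof.
  apply pos_by_continuous_induction; [intros; apply continuous_u_ext|].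
  intros T0 HT0 Hbelow; unfold u_ext.
  apply Rmult_lt_0_compat; [apply exp_pos|].
  enough (0 <= RInt source 0 T0) by lra.
  apply RInt_ge_0; [exact HT0 | apply ex_RInt_source|].
  intros r Hr; rewrite source_opt_cost by (try apply Hbelow; lra).
  apply Rlt_le, Rmult_lt_0_compat;
    [apply Rmult_lt_0_compat; [exact lambda_pos | apply exp_pos]|].
  apply opt_cost_pos, Hbelow; lra.
Qed.

Lemma continuous_source x : continuous source x.
Proof.
  apply (continuous_ext (fun r => lambda * exp (lambda * Rmax r 0)
                                  * opt_cost gamma (u_ext (Rmax r 0)))).
  { intros r; transitivity (source (Rmax r 0)).
    - symmetry; apply source_opt_cost; [apply Rmax_r | apply u_ext_pos, Rmax_r].
    - unfold source; rewrite (Rmax_left (Rmax r 0) 0) by apply Rmax_r; reflexivity. }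
  apply (continuous_mult (K := R_AbsRing) (fun r => lambda * exp (lambda * Rmax r 0))
           (fun r => opt_cost gamma (u_ext (Rmax r 0)))).
  - apply (continuous_comp (fun r => Rmax r 0) (fun y => lambda * exp (lambda * y)));
      [apply continuous_Rmax_0|].
    apply (ex_derive_continuous (K := R_AbsRing) (V := R_NormedModule)); auto_derive; auto.
  - apply (continuous_comp (fun r => u_ext (Rmax r 0)) (opt_cost gamma)).
    + apply (continuous_comp (fun r => Rmax r 0) u_ext);
        [apply continuous_Rmax_0 | apply continuous_u_ext].
    + apply continuous_opt_cost; [exact gamma_gt_1 | apply u_ext_pos, Rmax_r].
Qed.

Lemma is_derive_u_ext T : 0 <= T ->
  is_derive u_ext T (lambda * (opt_cost gamma (u_ext T) - u_ext T)).
Proof.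
  intros HT; unfold u_ext; auto_derive.
  - split; [apply ex_RInt_source | split; [|exact I]].
    apply filter_forall; intros x; apply continuity_pt_filterlim, continuous_source.
  - fold (u_ext T); rewrite source_opt_cost by (try apply u_ext_pos; exact HT).
    unfold u_ext; change (RInt (fun x => source x) 0 T) with (RInt source 0 T).
    generalize (RInt source 0 T : R); intros I.
    replace (lambda * T) with (- (- lambda * T)) by ring; rewrite exp_Ropp.
    field; apply Rgt_not_eq, exp_pos.
Qed.


Definition a_ext (T : R) : R := opt_share gamma (u_ext T).

Lemma a_eq_a_ext T : 0 <= T -> a T = a_ext T.
Proof.
  intros HT; destruct (a_argmin T HT) as [Ha Hmin].
  unfold a_ext; rewrite <- u_eq_u_ext by exact HT.
  apply argmin_cost_opt_share; try assumption.
  rewrite u_eq_u_ext by exact HT; apply u_ext_pos, HT.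
Qed.

Lemma a_ext_0 : a_ext 0 = 1 / 2.
Proof. unfold a_ext; rewrite u_ext_0; apply opt_share_1. Qed.

Lemma is_derive_a_ext T : 0 <= T -> is_derive a_ext T (a_rate lambda gamma (a_ext T)).
Proof.
  intros HT; assert (Hu := u_ext_pos T HT).
  unfold a_ext; rewrite <- a_rate_opt_share by assumption.
  apply (is_derive_comp (opt_share gamma) u_ext T);
    [apply is_derive_opt_share | apply is_derive_u_ext]; assumption.
Qed.

Lemma a_rate_a_ext_neg T : a_rate lambda gamma (a_ext T) < 0.
Proof. apply a_rate_neg, opt_share_bounds; assumption. Qed.

Lemma a_ext_convex x y t : 0 <= x -> 0 <= y -> 0 <= t <= 1 ->
  a_ext (t * x + (1 - t) * y) <= t * a_ext x + (1 - t) * a_ext y.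
Proof.
  apply (convex_of_derive_nondecreasing a_ext (fun T => a_rate lambda gamma (a_ext T)));
    [exact is_derive_a_ext|].
  assert (Hdecr := nonincreasing_of_derive_neg a_ext (fun T => a_rate lambda gamma (a_ext T))
                     is_derive_a_ext (fun T _ => a_rate_a_ext_neg T)).
  intros x' y' Hx' Hxy'; apply a_rate_antitone; try assumption.
  - apply opt_share_bounds.
  - apply Hdecr; assumption.
  - rewrite <- a_ext_0; apply Hdecr; lra.
Qed.

End DynamicProgramming.

Theorem corollary3p8 (lambda gamma : R) (u a : R -> R) :
  0 < lambda -> 1 < gamma ->
  (forall T, 0 <= T ->
     ex_RInt (fun s => lambda * exp (- lambda * s)
                       * min01 (fun b => cost gamma b (u (T - s)))) 0 T) ->
  (forall T, 0 <= T -> u T = dpp_rhs lambda gamma u T) ->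
  (forall T, 0 <= T -> 0 <= a T <= 1 /\
     forall b, 0 <= b <= 1 -> cost gamma (a T) (u T) <= cost gamma b (u T)) ->
  u 0 = 1 /\
  (forall T, 0 < T ->
     is_derive u T (lambda * u T
        * (1 / pw (1 + pw (u T) (1 / (gamma - 1))) (gamma - 1) - 1))) /\
  filterlim (fun h => (u h - u 0) / h) (at_right 0)
     (locally (lambda * u 0
        * (1 / pw (1 + pw (u 0) (1 / (gamma - 1))) (gamma - 1) - 1))) /\
  a 0 = 1 / 2 /\
  (forall T, 0 < T ->
     is_derive a T (lambda / (gamma - 1) * a T * (1 - a T)
                      * (pw (1 - a T) (gamma - 1) - 1))) /\
  filterlim (fun h => (a h - a 0) / h) (at_right 0)
     (locally (lambda / (gamma - 1) * a 0 * (1 - a 0)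
                 * (pw (1 - a 0) (gamma - 1) - 1))) /\
  (forall T, 0 <= T ->
     lambda / (gamma - 1) * a T * (1 - a T) * (pw (1 - a T) (gamma - 1) - 1) < 0) /\
  (forall x y t, 0 <= x -> 0 <= y -> 0 <= t <= 1 ->
     a (t * x + (1 - t) * y) <= t * a x + (1 - t) * a y).
Proof.
  intros Hl Hg Hint Hdpp Hargmin.
  set (v := u_ext lambda gamma u); set (s := a_ext lambda gamma u).
  assert (Huv : forall T, 0 <= T -> u T = v T) by exact (u_eq_u_ext lambda gamma u Hint Hdpp).
  assert (Has : forall T, 0 <= T -> a T = s T)
    by exact (a_eq_a_ext lambda gamma u a Hl Hg Hint Hdpp Hargmin).
  assert (Hdv : forall T, 0 <= T -> is_derive v T (u_rate lambda gamma (u T))).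
  { intros T HT; rewrite Huv, u_rate_opt_cost by (try apply u_ext_pos; assumption).
    apply is_derive_u_ext; assumption. }
  assert (Hds : forall T, 0 <= T -> is_derive s T (a_rate lambda gamma (a T))).
  { intros T HT; rewrite Has by exact HT; apply is_derive_a_ext; assumption. }
  split; [rewrite Huv by lra; apply u_ext_0|].
  split; [intros T HT; apply (is_derive_ext_nonneg v u T _ HT Huv), Hdv; lra|].
  split; [apply (filterlim_diff_quotient_at_right v u _ Huv), Hdv; lra|].
  split; [rewrite Has by lra; apply a_ext_0|].
  split; [intros T HT; apply (is_derive_ext_nonneg s a T _ HT Has), Hds; lra|].
  split; [apply (filterlim_diff_quotient_at_right s a _ Has), Hds; lra|].
  split; [intros T HT; rewrite Has by exact HT; apply a_rate_a_ext_neg; assumption|].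
  intros x y t Hx Hy Ht.
  assert (0 <= t * x + (1 - t) * y) by (apply Rplus_le_le_0_compat; apply Rmult_le_pos; lra).
  rewrite !Has by assumption; apply a_ext_convex; assumption.
Qed.
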